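(* Consider a clustered gossip network with $m$ clusters of $k$ end-nodes each, as described in the context. Let $F_c$ denote the average binary freshness $\lim_{t\to\infty}\mathbb{E}[F_c(t)]$ of a cluster head, and for a nonempty subset $S$ of the end-nodes of a single cluster let $F_S=\lim_{t\to\infty}\mathbb{E}[\max_{j\in S}F_j(t)]$. Then $$F_S=\frac{\lambda_c(S)F_c+\sum_{i\in N(S)}\lambda_i(S)F_{S\cup\{i\}}}{\lambda_e+\lambda_c(S)+\sum_{i\in N(S)}\lambda_i(S)},\qquad F_c=\frac{\lambda_s}{\lambda_s+m\lambda_e}.$$
   Context: Model: The information at a source is updated (a new version is generated) according to a Poisson process of rate $\lambda_e>0$. There are $n=km$ end-nodes partitioned into $m$ clusters of $k$ nodes each, and each cluster has a cluster head. The source sends its current version to each cluster head according to a Poisson process of rate $\lambda_s/m$; each cluster head sends its stored version to each of the $k$ end-nodes of its own cluster according to a Poisson process of rate $\lambda_c/k$; an end-node $i$ sends its stored version to an end-node $j\ne i$ of the same cluster according to a Poisson process of rate $\lambda_{ij}\ge0$ (there is no gossip between different clusters, and cluster heads receive only from the source). All processes are independent. A node receiving a version keeps the fresher of its stored and received versions. The binary freshness $F_x(t)$ of a node (end-node or cluster head) $x$ is $1$ if it stores the current source version at time $t$ and $0$ otherwise. Notation for a subset $S$ of end-nodes of one cluster: $\lambda_c(S)$ is the total update rate from that cluster's head into $S$ (equal to $|S|\lambda_c/k$); for an end-node $i\notin S$, $\lambda_i(S)=\sum_{j\in S}\lambda_{ij}$; $N(S)=\{i\notin S:\lambda_i(S)>0\}$.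 *)

From HB Require Import structures.
From mathcomp Require Import all_boot all_order all_algebra.
From mathcomp Require Import all_classical all_reals all_analysis.
Set Implicit Arguments. Unset Strict Implicit. Unset Printing Implicit Defensive.
Import Order.TTheory GRing.Theory Num.Theory.
Import numFieldNormedType.Exports.
Local Open Scope ring_scope.

(* Nodes of the clustered network: cluster heads [inl h] (h : 'I_m) and
   end-nodes [inr (h, j)] = end-node j of cluster h. *)
Definition node (m k : nat) := ('I_m + 'I_m * 'I_k)%type.

(* A state of the binary-freshness Markov chain: the freshness bit of every
   cluster head and every end-node. *)
Definition state (m k : nat) := {ffun node m k -> bool}.

Definition upd m k (x : state m k) (a : node m k) (b : bool) : state m k :=
  [ffun z => if z == a then b else x z].

(* source generates a new version: nobody is fresh any more *)
Definition ev_reset m k (x : state m k) : state m k := [ffun _ => false].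
Definition ev_src m k (h : 'I_m) (x : state m k) : state m k :=
  upd x (inl h) true.
(* cluster head h sends to its end-node j: j keeps the fresher version *)
Definition ev_head m k (h : 'I_m) (j : 'I_k) (x : state m k) : state m k :=
  upd x (inr (h, j)) (x (inr (h, j)) || x (inl h)).
Definition ev_gossip m k (h : 'I_m) (i j : 'I_k) (x : state m k) : state m k :=
  upd x (inr (h, j)) (x (inr (h, j)) || x (inr (h, i))).

(* net probability flow into y caused by a transition map f (per unit rate) *)
Definition flow (R : realType) m k (f : state m k -> state m k)
    (p : state m k -> R) (y : state m k) : R :=
  (\sum_(x | f x == y) p x) - p y.

(* Right-hand side of the Kolmogorov forward equation p' = p Q of the
   continuous-time Markov chain of freshness bits. *)
Definition generator (R : realType) (m k : nat) (le ls lc : R)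
    (lam : 'I_m -> 'I_k -> 'I_k -> R) (p : state m k -> R) (y : state m k) : R :=
  le * flow (@ev_reset m k) p y
  + \sum_(h < m) (ls / m%:R) * flow (ev_src h) p y
  + \sum_(h < m) \sum_(j < k) (lc / k%:R) * flow (ev_head h j) p y
  + \sum_(h < m) \sum_(i < k) \sum_(j < k | j != i)
        lam h i j * flow (ev_gossip h i j) p y.

Definition E_head (R : realType) m k (p : R -> state m k -> R) (h : 'I_m) (t : R) : R :=
  \sum_(x : state m k) p t x * (x (inl h))%:R.

Definition E_max (R : realType) m k (p : R -> state m k -> R) (h : 'I_m)
    (S : {set 'I_k}) (t : R) : R :=
  \sum_(x : state m k) p t x *
     (\big[maxn/0%N]_(j in S) nat_of_bool (x (inr (h, j))))%:R.

Definition lamc_set (R : realType) k (lc : R) (S : {set 'I_k}) : R :=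
  #|S|%:R * (lc / k%:R).
Definition lam_to_set (R : realType) m k (lam : 'I_m -> 'I_k -> 'I_k -> R)
    (h : 'I_m) (i : 'I_k) (S : {set 'I_k}) : R :=
  \sum_(j in S) lam h i j.
Definition Nset (R : realType) m k (lam : 'I_m -> 'I_k -> 'I_k -> R)
    (h : 'I_m) (S : {set 'I_k}) : {set 'I_k} :=
  [set i | (i \notin S) && (0 < lam_to_set lam h i S)].

(* Expectations [E f(X_t)] evolve by the adjoint generator [L].  For the head
   bit [F_c], the group bit [F_S = max_(j in S) F_j] and the indicator [W_S] of
   "some node of [S] is fresh while the head is stale", [L] is affine:
     (E F_c)' = ls/m - (le + ls/m) E F_c,
     (E W_S)' = - (le + ls/m + sum_i lam_i(S)) E W_S + sum_i lam_i(S) E W_(S+i),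
     (E F_S)' = - (le + lam_c(S) + sum_i lam_i(S)) E F_S
                + lam_c(S) (E F_c + E W_S) + sum_i lam_i(S) E F_(S+i),
   with [i] ranging over the end-nodes outside [S].  A solution of
   [y' = - c y + f] with [c > 0] and [f --> L] tends to [L / c]; by downward
   induction on [S] this gives [E W_S --> 0] and then the recursion for [F_S].
   The indices with [lam_i(S) = 0] contribute nothing, so summing over [N(S)]
   or over all [i] outside [S] is the same. *)
From HB Require Import structures.
From mathcomp Require Import all_boot all_order all_algebra.
From mathcomp Require Import all_classical all_reals all_analysis.
From mathcomp Require Import ring lra.
Import Order.TTheory GRing.Theory Num.Theory.
Import numFieldNormedType.Exports.
Local Open Scope classical_set_scope.
Local Open Scope ring_scope.


Section linear_ode.
Context {R : realType}.
Implicit Types (y f : R -> R) (a c t K L : R).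

Lemma is_derive_continuous {y} {dy : R -> R} {A : set R} :
  (forall t, is_derive t 1 y (dy t)) -> {within A, continuous y}.
Proof.
move=> ydy; apply: continuous_subspaceT => t.
apply/differentiable_continuous/derivable1_diffP.
by case: (ydy t).
Qed.

Lemma linear_ode_le {y f c} K a : 0 < c ->
  (forall t, is_derive t 1 y (- c * y t + f t)) ->
  (forall t, a <= t -> f t <= K) ->
  forall t, a <= t -> y t - K / c <= expR (c * (a - t)) * (y a - K / c).
Proof.
move=> c0 dy fK t at_.
(* integrating factor: [u' = expR (c s) * (f s - K) <= 0] *)
pose u s := expR (c * s) * (y s - K / c).
have du (s : R) : is_derive s (1 : R) u (expR (c * s) * (f s - K)).
  have dexp : is_derive s (1 : R) (fun s : R => expR (c * s)) (expR (c * s) * c).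
    have dlin : is_derive s (1 : R) (fun s : R => c * s) c.
      by apply: is_derive_eq; rewrite /GRing.scale /= mulr1.
    exact: (is_derive1_comp (f := expR) (g := fun s : R => c * s)).
  have du : is_derive s (1 : R) u _ :=
    is_deriveM dexp (is_deriveB (dy s) (is_derive_cst (K / c) s 1)).
  apply: (is_derive_eq du); rewrite /GRing.scale /= !fctE; field.
  by rewrite gt_eqF.
have [xi xi_at uE] := MVT_segment at_ (fun x _ => du x) (is_derive_continuous du).
have u_le : u t <= u a.
  rewrite -subr_le0 uE mulr_le0_ge0 ?subr_ge0 //.
  rewrite pmulr_rle0 ?expR_gt0 // subr_le0 fK //.
  by move: xi_at; rewrite in_itv => /andP[].
rewrite -(ler_pM2l (expR_gt0 (c * t))) mulrA -expRD.
by rewrite -mulrDr addrCA subrr addr0.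
Qed.

Lemma linear_ode_dist {y f c L e a} : 0 < c ->
  (forall t, is_derive t 1 y (- c * y t + f t)) ->
  (forall t, a <= t -> `|f t - L| <= e) ->
  forall t, a <= t -> `|y t - L / c| <= e / c + expR (c * (a - t)) * `|y a - L / c|.
Proof.
move=> c0 dy fLe t at_.
have dNy (s : R) : is_derive s (1 : R) (fun s => - y s) (- c * - y s + - f s).
  by apply: (is_derive_eq (is_deriveN (dy s))); rewrite opprD mulrN.
have up : y t - (L + e) / c <= expR (c * (a - t)) * (y a - (L + e) / c).
  apply: (linear_ode_le (L + e) a c0 dy _ t at_) => s /fLe.
  by rewrite ler_distl => /andP[_ ->].
have lo : - y t - (- L + e) / c <= expR (c * (a - t)) * (- y a - (- L + e) / c).
  apply: (linear_ode_le (- L + e) a c0 dNy _ t at_) => s /fLe.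
  by rewrite ler_distl lerNl opprD opprK addrC => /andP[-> _].
set D := expR _ in up lo *.
have D_gt0 : 0 < D := expR_gt0 _.
have ec_ge0 : 0 <= e / c.
  apply: divr_ge0; last exact: ltW.
  exact: le_trans (normr_ge0 _) (fLe a (lexx a)).
have Dec_ge0 : 0 <= D * (e / c) by apply: mulr_ge0; first exact: ltW.
have up_norm : D * (y a - L / c) <= D * `|y a - L / c|.
  by apply: ler_wpM2l; [exact: ltW | exact: ler_norm].
have lo_norm : D * - (y a - L / c) <= D * `|y a - L / c|.
  by apply: ler_wpM2l; [exact: ltW | rewrite -normrN ler_norm].
move: up lo up_norm lo_norm; rewrite !mulrDl !mulNr.
rewrite ler_distl !(mulrBr, mulrDr, mulrN) => up lo upn lon.
apply/andP; split; lra.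
Qed.

Lemma expR_affine_cvg0 c a : 0 < c -> expR (c * (a - t)) @[t --> +oo] --> 0.
Proof.
move=> c0.
have -> : (fun t => expR (c * (a - t))) = (fun x => expR (- x)) \o (fun t => c * (t - a)).
  by apply/funext => t /=; rewrite -mulrN opprB.
have lin_cvgy : c * (t - a) @[t --> +oo] --> +oo.
  apply/cvgryPge => A; near=> t.
  rewrite -ler_pdivrMl // lerBrDr; near: t.
  by apply: nbhs_pinfty_ge; exact: num_real.
exact: cvg_comp lin_cvgy (@cvgr_expR R).
Unshelve. all: by end_near. Qed.

Lemma linear_ode_cvg {y f c L} : 0 < c ->
  (forall t, is_derive t 1 y (- c * y t + f t)) ->
  f t @[t --> +oo] --> L -> y t @[t --> +oo] --> L / c.
Proof.
move=> c0 dy fL; apply/cvgrPdist_le => eps eps0.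
have eps2_gt0 : 0 < eps / 2 by rewrite divr_gt0.
have e_gt0 : 0 < eps / 2 * c by rewrite mulr_gt0.
move/cvgrPdist_le : fL => /(_ _ e_gt0) [a [_ fa]].
have fa1 t : a + 1 <= t -> `|f t - L| <= eps / 2 * c.
  by move=> at_; rewrite distrC fa // (lt_le_trans _ at_) // ltrDl.
have decay : expR (c * (a + 1 - t)) * `|y (a + 1) - L / c| @[t --> +oo] --> 0.
  by rewrite -(mul0r `|y (a + 1) - L / c|); apply: cvgMl; exact: expR_affine_cvg0.
move/cvgrPdist_le : decay => /(_ _ eps2_gt0) decay.
near=> t.
have at_ : a + 1 <= t by near: t; apply: nbhs_pinfty_ge; exact: num_real.
rewrite distrC (le_trans (linear_ode_dist c0 dy fa1 t at_)) //.
rewrite mulfK ?gt_eqF // [leRHS](splitr eps) lerD2l.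
apply: le_trans (ler_norm _) _; rewrite -normrN -sub0r.
near: t; exact: decay.
Unshelve. all: by end_near. Qed.
End linear_ode.

Lemma cvg_lim_pinfty {R : realType} (f : R -> R) l :
  f t @[t --> +oo] --> l -> cvg (f t @[t --> +oo]) /\ lim (f t @[t --> +oo]) = l.
Proof. by move=> fl; split; [exact: cvgP fl | exact: cvg_lim fl]. Qed.

Lemma cvg_sum {R : realType} {T : Type} {F : set_system T} {FF : Filter F}
    (I : finType) (P : pred I) (G : I -> T -> R) (l : I -> R) :
  (forall i, P i -> G i x @[x --> F] --> l i) ->
  \sum_(i | P i) G i x @[x --> F] --> \sum_(i | P i) l i.
Proof. by move=> Gl; apply: cvg_big => //; exact: add_continuous. Qed.

Lemma is_derive_sum_mul {R : realType} {T : finType} (q : R -> T -> R) (dq f : T -> R)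
    (t : R) :
  (forall x, is_derive t 1 (q^~ x) (dq x)) ->
  is_derive t 1 (fun s => \sum_x q s x * f x) (\sum_x dq x * f x).
Proof.
move=> dqx.
have -> : (fun s => \sum_x q s x * f x) = \sum_x (fun s => q s x * f x).
  by apply/funext => s; rewrite fct_sumE.
elim/big_ind2 : _ => [|? ? ? ? ? ?|x _]; [exact: is_derive_cst | exact: is_deriveD | ].
have dqf : is_derive t 1 (fun s => q s x * f x) _ :=
  is_deriveM (dqx x) (is_derive_cst (f x) t 1).
by apply: (is_derive_eq dqf); rewrite scaler0 add0r /GRing.scale /= mulrC.
Qed.

Lemma bigmax_nat_of_bool (I : finType) (P : pred I) (b : I -> bool) :
  \big[maxn/0%N]_(i | P i) b i = [exists (i | P i), b i] :> nat.
Proof.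
rewrite -big_orE (big_morph nat_of_bool (id1 := 0%N) (op1 := maxn)) //.
by case; case.
Qed.

Lemma setU1_ind (T : finType) (P : {set T} -> Prop) :
  (forall S : {set T}, (forall i, i \notin S -> P (i |: S)) -> P S) -> forall S, P S.
Proof.
move=> IH S; have [n] := ubnP #|~: S|; elim: n S => // n IHn S ltSn.
apply: IH => i iS; apply: IHn; apply: leq_trans (ltnSE ltSn).
by apply: proper_card; rewrite properC properEcard subsetU1 cardsU1 iS add1n ltnSn.
Qed.

Section generator.
Context {R : realType} {m k : nat}.
Variables (le ls lc : R) (lam : 'I_m -> 'I_k -> 'I_k -> R).
Local Notation state := (state m k).
Implicit Types (p f : state -> R) (x y : state).

Definition adj_generator f x : R :=
  le * (f (ev_reset x) - f x)
  + \sum_(h < m) (ls / m%:R) * (f (ev_src h x) - f x)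
  + \sum_(h < m) \sum_(j < k) (lc / k%:R) * (f (ev_head h j x) - f x)
  + \sum_(h < m) \sum_(i < k) \sum_(j < k | j != i)
        lam h i j * (f (ev_gossip h i j x) - f x).

Lemma sum_flow_mul (F : state -> state) p f :
  \sum_y flow F p y * f y = \sum_x p x * (f (F x) - f x).
Proof.
under eq_bigr do rewrite mulrBl.
under [RHS]eq_bigr do rewrite mulrBr.
rewrite !sumrB; congr (_ - _).
under eq_bigr do rewrite big_distrl.
rewrite (exchange_big_dep xpredT) //=; apply: eq_bigr => x _.
by rewrite (big_pred1 (F x)) // => y; rewrite /= eq_sym.
Qed.

Lemma sum_scaled_flow_mul a (F : state -> state) p f :
  \sum_y a * flow F p y * f y = \sum_x p x * (a * (f (F x) - f x)).
Proof.
under eq_bigr do rewrite -mulrA.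
rewrite -big_distrr sum_flow_mul big_distrr.
by apply: eq_bigr => x _; rewrite mulrCA.
Qed.

Lemma exchange_sum_mull (I : finType) (P : pred I) (G : I -> state -> R) f :
  \sum_y (\sum_(i | P i) G i y) * f y = \sum_(i | P i) \sum_y G i y * f y.
Proof. under eq_bigr do rewrite big_distrl; exact: exchange_big. Qed.

Lemma exchange_sum_mulr (I : finType) (P : pred I) (G : I -> state -> R) p :
  \sum_x p x * (\sum_(i | P i) G i x) = \sum_(i | P i) \sum_x p x * G i x.
Proof. under eq_bigr do rewrite big_distrr; exact: exchange_big. Qed.

Lemma sum_generator_mul p f :
  \sum_y generator le ls lc lam p y * f y = \sum_x p x * adj_generator f x.
Proof.
rewrite /generator /adj_generator.
under eq_bigr do rewrite !mulrDl.
under [RHS]eq_bigr do rewrite 3!mulrDr.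
rewrite !big_split /=; congr (_ + _ + _ + _).
- exact: sum_scaled_flow_mul.
- rewrite exchange_sum_mull exchange_sum_mulr; apply: eq_bigr => h _.
  exact: sum_scaled_flow_mul.
- rewrite exchange_sum_mull exchange_sum_mulr; apply: eq_bigr => h _.
  rewrite exchange_sum_mull exchange_sum_mulr; apply: eq_bigr => j _.
  exact: sum_scaled_flow_mul.
- rewrite exchange_sum_mull exchange_sum_mulr; apply: eq_bigr => h _.
  rewrite exchange_sum_mull exchange_sum_mulr; apply: eq_bigr => i _.
  rewrite exchange_sum_mull exchange_sum_mulr; apply: eq_bigr => j _.
  exact: sum_scaled_flow_mul.
Qed.

Lemma adj_generator_cst c x : adj_generator (fun=> c) x = 0.
Proof.
rewrite /adj_generator subrr !mulr0 !big1_eq !add0r.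
by do 3!apply: big1 => ? _; rewrite mulr0.
Qed.

End generator.

Section cluster.
Context {R : realType} {m k : nat}.
Variables (le ls lc : R) (lam : 'I_m -> 'I_k -> 'I_k -> R) (h : 'I_m).
Local Notation state := (state m k).
Local Notation L := (adj_generator le ls lc lam).
Implicit Types (x : state) (S : {set 'I_k}) (phi : bool -> bool -> R).

Definition head_fresh x : bool := x (inl h).
Definition group_fresh S x : bool := [exists j in S, x (inr (h, j))].
Definition obs phi S x : R := phi (head_fresh x) (group_fresh S x).

Lemma group_fresh_raise S h' j c (x : state) :
  group_fresh S (upd x (inr (h', j)) (x (inr (h', j)) || c))
  = group_fresh S x || [&& h' == h, j \in S & c].
Proof.
rewrite /group_fresh; case: (eqVneq h' h) => [<-|ne] /=; last first.
  rewrite orbF; apply: eq_existsb => j'.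
  by rewrite ffunE (inj_eq inr_inj) xpair_eqE eq_sym (negbTE ne).
apply/existsP/orP => [[j' /andP[j'S]]|].
  rewrite ffunE (inj_eq inr_inj) xpair_eqE eqxx /=.
  case: eqVneq => [jj /orP[xj|cj]|_ xj']; [left|right|left].
  - by apply/existsP; exists j'; rewrite j'S jj xj.
  - by rewrite -jj j'S cj.
  - by apply/existsP; exists j'; rewrite j'S.
case=> [/existsP[j' /andP[j'S xj']]|/= /andP[jS cj]].
  exists j'; rewrite j'S ffunE (inj_eq inr_inj) xpair_eqE eqxx /=.
  by case: eqVneq => [<-|]; rewrite xj'.
by exists j; rewrite jS ffunE eqxx cj orbT.
Qed.

Lemma group_fresh_setU1 i S x : group_fresh (i |: S) x = x (inr (h, i)) || group_fresh S x.
Proof.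
apply/existsP/orP => [[j /andP[]]|[xi|/existsP[j /andP[jS xj]]]].
- rewrite in_setU1 => /orP[/eqP-> ->|jS xj]; first by left.
  by right; apply/existsP; exists j; rewrite jS.
- by exists i; rewrite setU11.
- by exists j; rewrite in_setU1 jS orbT.
Qed.

Lemma group_fresh_mem {i S x} : i \in S -> x (inr (h, i)) -> group_fresh S x.
Proof. by move=> iS xi; apply/existsP; exists i; rewrite iS. Qed.

Lemma obs_reset phi S x : obs phi S (ev_reset x) = phi false false.
Proof.
rewrite /obs /head_fresh /group_fresh ffunE; congr phi.
by apply/existsP => -[j]; rewrite ffunE andbF.
Qed.

Lemma obs_src phi S h' x :
  obs phi S (ev_src h' x) = if h' == h then phi true (group_fresh S x) else obs phi S x.
Proof.
rewrite /obs; have -> : group_fresh S (ev_src h' x) = group_fresh S x.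
  by apply: eq_existsb => j; rewrite ffunE.
by rewrite /head_fresh ffunE (inj_eq inl_inj) eq_sym; case: eqP.
Qed.

Lemma obs_head phi S h' j x : obs phi S (ev_head h' j x) =
  if (h' == h) && (j \in S) then phi (head_fresh x) (group_fresh S x || head_fresh x)
  else obs phi S x.
Proof.
rewrite /obs /ev_head group_fresh_raise /head_fresh ffunE /=.
by case: (eqVneq h' h) => [->|_]; case: (j \in S); rewrite /= ?orbF.
Qed.

Lemma obs_gossip phi S h' i j x : obs phi S (ev_gossip h' i j x) =
  if [&& h' == h, i \notin S & j \in S] then obs phi (i |: S) x else obs phi S x.
Proof.
rewrite /obs /ev_gossip group_fresh_raise /head_fresh ffunE /=.
case: (eqVneq h' h) => [->|_]; rewrite /= ?orbF //.
case: (boolP (i \in S)) => iS /=; last first.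
  by rewrite group_fresh_setU1; case: (j \in S); rewrite /= ?orbF // orbC.
case: (boolP (x (inr (h, i)))) => xi; rewrite ?andbF ?orbF //.
by rewrite (group_fresh_mem iS xi).
Qed.

Definition gossip_rate S : R := \sum_(i | i \notin S) lam_to_set lam h i S.

Lemma adj_generator_obs phi S x : L (obs phi S) x =
  le * (phi false false - obs phi S x)
  + ls / m%:R * (phi true (group_fresh S x) - obs phi S x)
  + lamc_set lc S * (phi (head_fresh x) (group_fresh S x || head_fresh x) - obs phi S x)
  + \sum_(i | i \notin S) lam_to_set lam h i S * (obs phi (i |: S) x - obs phi S x).
Proof.
rewrite /adj_generator obs_reset; congr (_ + _ + _ + _).
- rewrite (big_only1 h) ?obs_src ?eqxx // => h' /negbTE hh' _.
  by rewrite obs_src hh' subrr mulr0.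
- rewrite (big_only1 h) // => [|h' /negbTE hh' _]; last first.
    by apply: big1 => j _; rewrite obs_head hh' subrr mulr0.
  under eq_bigr => j _ do rewrite obs_head eqxx /=.
  rewrite (bigID (mem S)) /= [X in _ + X]big1 => [|j /negbTE ->]; last by rewrite subrr mulr0.
  under eq_bigr => j -> do [].
  by rewrite addr0 sumr_const /lamc_set -mulrnAl mulr_natl.
- rewrite (big_only1 h) // => [|h' /negbTE hh' _]; last first.
    by do 2!apply: big1 => ? _; rewrite obs_gossip hh' subrr mulr0.
  rewrite (bigID (mem S)) /= big1 ?add0r => [|i iS]; last first.
    by apply: big1 => j _; rewrite obs_gossip iS andbF subrr mulr0.
  apply: eq_bigr => i iS; rewrite /lam_to_set big_distrl /=.
  under eq_bigr => j _ do rewrite obs_gossip eqxx iS /=.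
  rewrite (bigID (mem S)) /= [X in _ + X]big1 => [|j /andP[_ /negbTE ->]]; last first.
    by rewrite subrr mulr0.
  rewrite addr0; apply: eq_big => [j|j /andP[_ ->] //].
  by case: (boolP (j \in S)) => jS; rewrite ?andbF ?andbT //; apply: contraNneq iS => <-.
Qed.

(* the set argument of [obs] is irrelevant for the head bit *)
Definition head_obs : state -> R := obs (fun a _ => (a : nat)%:R) finset.set0.
Definition group_obs S : state -> R := obs (fun _ b => (b : nat)%:R) S.
Definition lag_obs S : state -> R := obs (fun a b => (~~ a && b : nat)%:R) S.

Lemma adj_generator_head_obs x :
  L head_obs x = - (le + ls / m%:R) * head_obs x + ls / m%:R.
Proof.
rewrite adj_generator_obs big1 => [|i _]; last by rewrite subrr mulr0.
by rewrite /obs subrr mulr0 /=; ring.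
Qed.

Lemma adj_generator_lag_obs S x : L (lag_obs S) x =
  - (le + ls / m%:R + gossip_rate S) * lag_obs S x
  + \sum_(i | i \notin S) lam_to_set lam h i S * lag_obs (i |: S) x.
Proof.
rewrite adj_generator_obs; under eq_bigr do rewrite mulrBr.
rewrite sumrB -big_distrl /= /obs /=.
have -> : ~~ head_fresh x && (group_fresh S x || head_fresh x) = ~~ head_fresh x && group_fresh S x.
  by case: (head_fresh x); rewrite ?orbT ?orbF.
by rewrite subrr mulr0 /gossip_rate; ring.
Qed.

Lemma adj_generator_group_obs S x : L (group_obs S) x =
  - (le + lamc_set lc S + gossip_rate S) * group_obs S x
  + (lamc_set lc S * (head_obs x + lag_obs S x)
     + \sum_(i | i \notin S) lam_to_set lam h i S * group_obs (i |: S) x).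
Proof.
rewrite adj_generator_obs; under eq_bigr do rewrite mulrBr.
rewrite sumrB -big_distrl /= /obs /= subrr mulr0.
have -> : (group_fresh S x || head_fresh x : nat)%:R =
    (head_fresh x : nat)%:R + (~~ head_fresh x && group_fresh S x : nat)%:R :> R.
  by case: (head_fresh x); case: (group_fresh S x); rewrite /= ?addr0 ?add0r.
by rewrite /gossip_rate; ring.
Qed.

End cluster.

Section freshness_limits.
Context {R : realType} {m k : nat}.
Variables (le ls lc : R) (lam : 'I_m -> 'I_k -> 'I_k -> R) (q : R -> state m k -> R).
Hypothesis le_gt0 : 0 < le.
Hypothesis ls_ge0 : 0 <= ls.
Hypothesis lc_ge0 : 0 <= lc.
Hypothesis lam_ge0 : forall h i j, 0 <= lam h i j.
Hypothesis q_forward :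
  forall (t : R) y, is_derive t 1 (q^~ y) (generator le ls lc lam (q t) y).
Hypothesis q0_mass : \sum_x q 0 x = 1.
Local Notation state := (state m k).
Local Notation L := (adj_generator le ls lc lam).
Implicit Types (f g : state -> R) (t : R) (S : {set 'I_k}).

Definition expect f t : R := \sum_x q t x * f x.

Lemma eq_expect {f g} : f =1 g -> expect f = expect g.
Proof. by move=> fg; apply/funext => t; apply: eq_bigr => x _; rewrite fg. Qed.

Lemma expectD f g t : expect (fun x => f x + g x) t = expect f t + expect g t.
Proof. by rewrite -big_split; apply: eq_bigr => x _; rewrite mulrDr. Qed.

Lemma expectZ a f t : expect (fun x => a * f x) t = a * expect f t.
Proof. by rewrite /expect big_distrr; apply: eq_bigr => x _; rewrite mulrCA. Qed.

Lemma expect_sum (I : finType) (P : pred I) (F : I -> state -> R) t :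
  expect (fun x => \sum_(i | P i) F i x) t = \sum_(i | P i) expect (F i) t.
Proof. by rewrite /expect -exchange_big; apply: eq_bigr => x _; rewrite big_distrr. Qed.

Lemma is_derive_expect f t : is_derive t 1 (expect f) (expect (L f) t).
Proof. by rewrite /expect -sum_generator_mul; exact: is_derive_sum_mul. Qed.

Lemma expect_cst c t : expect (fun=> c) t = c.
Proof.
have d0 (s : R) : is_derive s 1 (expect (fun=> 1)) 0.
  apply: is_derive_eq (is_derive_expect _ s) _.
  by apply: big1 => x _; rewrite adj_generator_cst mulr0.
rewrite /expect -big_distrl /=.
under eq_bigr do rewrite -[q t _]mulr1; rewrite -/(expect _ t).
rewrite (is_derive_0_is_cst t 0 d0) /expect.
by under eq_bigr do rewrite mulr1; rewrite q0_mass mul1r.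
Qed.

Variable h : 'I_m.
Local Notation head_obs := (head_obs h).
Local Notation group_obs := (group_obs h).
Local Notation lag_obs := (lag_obs h).
Local Notation gossip_rate := (gossip_rate lam h).

Lemma lamc_set_ge0 S : 0 <= lamc_set lc S.
Proof. by rewrite mulr_ge0 ?divr_ge0. Qed.

Lemma lam_to_set_ge0 i S : 0 <= lam_to_set lam h i S.
Proof. by apply: sumr_ge0 => j _; exact: lam_ge0. Qed.

Lemma gossip_rate_ge0 S : 0 <= gossip_rate S.
Proof. by apply: sumr_ge0 => i _; exact: lam_to_set_ge0. Qed.

Lemma ls_div_ge0 : 0 <= ls / m%:R.
Proof. exact: divr_ge0 ls_ge0 (ler0n _ m). Qed.

Lemma head_obs_cvg : expect head_obs t @[t --> +oo] --> ls / (ls + m%:R * le).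
Proof.
have m_gt0 : (0 < m%:R :> R) by rewrite ltr0n (leq_ltn_trans _ (ltn_ord h)).
have c_gt0 : 0 < le + ls / m%:R := ltr_wpDr ls_div_ge0 le_gt0.
have -> : ls / (ls + m%:R * le) = ls / m%:R / (le + ls / m%:R).
  by field; rewrite !gt_eqF // ltr_wpDr // mulr_gt0.
apply: linear_ode_cvg c_gt0 _ (cvg_cst _) => t.
apply: is_derive_eq (is_derive_expect _ t) _.
by rewrite (eq_expect (adj_generator_head_obs _ _ _ _ h)) expectD expect_cst expectZ.
Qed.

Lemma lag_obs_cvg S : expect (lag_obs S) t @[t --> +oo] --> 0.
Proof.
elim/setU1_ind: S => S IH.
have c_gt0 := ltr_wpDr (gossip_rate_ge0 S) (ltr_wpDr ls_div_ge0 le_gt0).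
rewrite -(mul0r (le + ls / m%:R + gossip_rate S)^-1).
apply: linear_ode_cvg c_gt0 _ _ => [t|].
  apply: is_derive_eq (is_derive_expect _ t) _.
  rewrite (eq_expect (adj_generator_lag_obs _ _ _ _ h S)) expectD expectZ expect_sum.
  by under eq_bigr do rewrite expectZ.
rewrite [X in _ --> X](_ : _ = \sum_(i | i \notin S) lam_to_set lam h i S * 0).
  by apply: cvg_sum => i /IH lag_cvg; exact: cvgMr.
by rewrite big1 // => i _; rewrite mulr0.
Qed.

Lemma group_obs_cvg S : expect (group_obs S) t @[t --> +oo] -->
  (lamc_set lc S * (ls / (ls + m%:R * le))
   + \sum_(i | i \notin S) lam_to_set lam h i S * lim (expect (group_obs (i |: S)) t @[t --> +oo]))
  / (le + lamc_set lc S + gossip_rate S).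
Proof.
elim/setU1_ind: S => S IH.
have c_gt0 := ltr_wpDr (gossip_rate_ge0 S) (ltr_wpDr (lamc_set_ge0 S) le_gt0).
apply: linear_ode_cvg c_gt0 _ _ => [t|].
  apply: is_derive_eq (is_derive_expect _ t) _.
  rewrite (eq_expect (adj_generator_group_obs _ _ _ _ h S)).
  rewrite expectD expectZ expectD expectZ expectD expect_sum.
  by under eq_bigr do rewrite expectZ.
apply: cvgD.
  apply: cvgMr; rewrite -[X in _ --> X]addr0.
  by apply: cvgD; [exact: head_obs_cvg | exact: lag_obs_cvg].
by apply: cvg_sum => i /IH /cvgP group_cvg; exact: cvgMr.
Qed.

Lemma sum_Nset S (G : 'I_k -> R) : (forall i, lam_to_set lam h i S = 0 -> G i = 0) ->
  \sum_(i in Nset lam h S) G i = \sum_(i | i \notin S) G i.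
Proof.
move=> G0; rewrite big_mkcond [RHS]big_mkcond; apply: eq_bigr => i _.
rewrite inE; case: (i \in S) => //=; case: ltrP => // lam_le0.
by rewrite G0 //; apply/eqP; rewrite eq_le lam_le0 lam_to_set_ge0.
Qed.

Lemma E_head_head_obs : E_head q h = expect head_obs.
Proof. by []. Qed.

Lemma E_max_group_obs S : E_max q h S = expect (group_obs S).
Proof.
by apply/funext => t; apply: eq_bigr => x _; rewrite bigmax_nat_of_bool.
Qed.

Lemma head_freshness_limit :
  cvg (E_head q h t @[t --> +oo]) /\ lim (E_head q h t @[t --> +oo]) = ls / (ls + m%:R * le).
Proof.
by rewrite E_head_head_obs; apply: cvg_lim_pinfty; exact: head_obs_cvg.
Qed.

Lemma group_freshness_limit S :
  cvg (E_max q h S t @[t --> +oo]) /\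
  lim (E_max q h S t @[t --> +oo]) =
    (lamc_set lc S * lim (E_head q h t @[t --> +oo])
     + \sum_(i in Nset lam h S) lam_to_set lam h i S * lim (E_max q h (i |: S) t @[t --> +oo]))
    / (le + lamc_set lc S + \sum_(i in Nset lam h S) lam_to_set lam h i S).
Proof.
rewrite (proj2 head_freshness_limit) !sum_Nset => [|i ->|i ->]; rewrite ?mul0r //.
under eq_bigr do rewrite E_max_group_obs.
by rewrite E_max_group_obs; apply: cvg_lim_pinfty; exact: group_obs_cvg.
Qed.

End freshness_limits.

Theorem theorem5 (R : realType) (m k : nat) (le ls lc : R)
    (lam : 'I_m -> 'I_k -> 'I_k -> R)
    (p : R -> state m k -> R) :
  0 < le -> 0 <= ls -> 0 <= lc ->
  (forall h i j, 0 <= lam h i j) ->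
  (* initial law: a probability distribution on the states *)
  (forall x, 0 <= p 0 x) -> \sum_x p 0 x = 1 ->
  (* p t is the law at time t: Kolmogorov forward equation *)
  (forall (t : R) (y : state m k), is_derive t (1 : R) (fun s => p s y) (generator le ls lc lam (p t) y)) ->
  (forall h : 'I_m,
     cvg (E_head p h t @[t --> +oo]) /\
     lim (E_head p h t @[t --> +oo]) = ls / (ls + m%:R * le)) /\
  (forall (h : 'I_m) (S : {set 'I_k}), S != finset.set0 ->
     cvg (E_max p h S t @[t --> +oo]) /\
     lim (E_max p h S t @[t --> +oo]) =
       (lamc_set lc S * lim (E_head p h t @[t --> +oo])
        + \sum_(i in Nset lam h S) lam_to_set lam h i S
             * lim (E_max p h (i |: S) t @[t --> +oo]))
       / (le + lamc_set lc S + \sum_(i in Nset lam h S) lam_to_set lam h i S)).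
Proof.
move=> le_gt0 ls_ge0 lc_ge0 lam_ge0 _ p0_mass p_forward.
split=> [h | h S _].
  exact: head_freshness_limit.
exact: group_freshness_limit.
Qed.
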